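(* Let $G$ be a connected graph, let $T$ be a spanning tree of $G$ rooted in $s$ which is an $\mathcal L$-tree of some DFS on $G$, and let $\sigma$ be a DFS order of the tree $T$ starting at $s$. Then $\sigma$ is a DFS order of $G$ and the $\mathcal L$-tree of $\sigma$ (with respect to $G$) is $T$.
   Context: Graphs are finite, simple, undirected. DFS: a search that starts at a vertex and repeatedly visits an unvisited neighbor of the most recently visited vertex that still has an unvisited neighbor; a DFS order of a graph is any order of its vertices produced this way. The $\mathcal L$-tree of a vertex order $(v_1,\dots,v_n)$ of a connected graph $G$ is the spanning tree rooted at $v_1$ with an edge from each $v_i$ ($i>1$) to its rightmost $G$-neighbor $v_j$ with $j<i$. A spanning tree $T$ rooted at $s$ is an $\mathcal L$-tree of DFS on $G$ if some DFS order of $G$ starting at $s$ has $\mathcal L$-tree $T$. *)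

From mathcomp Require Import all_boot.
Set Implicit Arguments. Unset Strict Implicit. Unset Printing Implicit Defensive.

Definition simple_graph (V : finType) (G : rel V) : Prop :=
  irreflexive G /\ symmetric G.

Definition connected_graph (V : finType) (G : rel V) : Prop :=
  forall x y : V, connect G x y.

Definition vertex_order (V : finType) (s : seq V) : Prop :=
  uniq s /\ forall x : V, x \in s.

(* s is a DFS order of G starting at r: s is a vertex order with head r, and
   for every position i > 0, the vertex s_i is adjacent to some earlier s_j
   such that every vertex visited strictly between j and i has no unvisited
   neighbour (i.e. s_j is the most recently visited vertex that still has an
   unvisited neighbour, and s_i is an unvisited neighbour of it). *)
Definition dfs_order (V : finType) (G : rel V) (r : V) (s : seq V) : Prop :=
  vertex_order s /\ head r s = r /\
  forall i, 0 < i < size s ->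
    exists2 j, j < i &
      G (nth r s j) (nth r s i) /\
      forall k, j < k < i -> forall w : V, G (nth r s k) w -> w \in take i s.

(* The L-tree of the vertex order s: each vertex y (other than the first) is
   joined to its rightmost G-neighbour preceding it in s. *)
Definition Lparent_edge (V : finType) (G : rel V) (s : seq V) (x y : V) : bool :=
  let P := [seq z <- take (index y s) s | G z y] in
  (P != [::]) && (last y P == x).

Definition Ltree (V : finType) (G : rel V) (s : seq V) : rel V :=
  fun x y => Lparent_edge G s x y || Lparent_edge G s y x.

(* A spanning tree of G (as an undirected edge relation): a connected simple
   subgraph of G with #|V| - 1 edges (each edge counted twice as an ordered
   pair). *)
Definition spanning_tree (V : finType) (G T : rel V) : Prop :=
  simple_graph T /\ subrel T G /\ connected_graph T /\
  #|[set p : V * V | T p.1 p.2]| = (#|V| - 1).*2.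

Definition is_Ltree_of_DFS (V : finType) (G T : rel V) (r : V) : Prop :=
  exists2 s, dfs_order G r s & Ltree G s =2 T.

From mathcomp Require Import all_boot zify.
Set Implicit Arguments. Unset Strict Implicit. Unset Printing Implicit Defensive.

(* Let s be a DFS order of G with L-tree T, and p the L-parent map.  In a DFS
   order each new vertex v is entered from p v, and every edge of G joins two
   vertices one of which is a T-ancestor of the other (DFS trees have no cross
   edges).  Now let sigma be a DFS order of T.  There too v is entered from p v,
   and every vertex visited between p v and v has its whole T-subtree already
   visited.  A G-neighbour of such a vertex is a T-ancestor (visited earlier) or
   a T-descendant (visited before v), so sigma obeys the DFS rule in G with the
   same choice of parents; hence its L-tree is again T. *)

Definition lparent (V : eqType) (G : rel V) (s : seq V) (v : V) : V :=
  last v [seq z <- take (index v s) s | G z v].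

Definition parent_tree (V : eqType) (p : V -> V) (r : V) : rel V :=
  fun u v => (v != r) && (p v == u) || (u != r) && (p u == v).

Lemma last_filter_take (T : eqType) (a : pred T) (s : seq T) x0 y c b :
  c < b <= size s -> a (nth x0 s c) ->
  (forall k, c < k < b -> ~~ a (nth x0 s k)) ->
  last y [seq z <- take b s | a z] = nth x0 s c.
Proof.
elim: b => // b IH /andP[cb bs] ac na.
rewrite (take_nth x0) // filter_rcons.
case: (ltngtP c b) => [lt_cb|?|<-]; [|lia|by rewrite ac last_rcons].
rewrite (negbTE (na b _)) ?lt_cb ?ltnSn //.
apply: IH => // [|k ?]; first by rewrite lt_cb ltnW.
by apply: na; lia.
Qed.

Lemma eq_dfs_order (V : finType) (G1 G2 : rel V) r s :
  G1 =2 G2 -> dfs_order G1 r s -> dfs_order G2 r s.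
Proof.
move=> eqG [vs [hs dfs]]; split => //; split => // i /dfs[j ji [Gji done]].
by exists j => //; split => [|k kji w]; rewrite -eqG //; apply: done.
Qed.

Section DfsOrder.
Variables (V : finType) (G : rel V) (r : V) (s : seq V).
Hypothesis dfs_s : dfs_order G r s.

Lemma dfs_mem v : v \in s.
Proof. by case: dfs_s => [[_]]. Qed.

Lemma dfs_index_nth b : b < size s -> index (nth r s b) s = b.
Proof. by case: dfs_s => [[uniq_s _] _] /index_uniq->. Qed.

Lemma dfs_index_root : index r s = 0.
Proof. by case: dfs_s (dfs_mem r) => _ []; case: s => //= x t -> _; rewrite eqxx. Qed.

Lemma dfs_index_gt0 v : v != r -> 0 < index v s < size s.
Proof.
move=> vr; rewrite index_mem dfs_mem andbT lt0n; apply: contra vr => /eqP v0.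
by rewrite -(nth_index r (dfs_mem v)) v0 -dfs_index_root nth_index ?dfs_mem.
Qed.

Lemma lparent_root : lparent G s r = r.
Proof. by rewrite /lparent dfs_index_root take0. Qed.

Lemma lparent_nth c b : c < b < size s -> G (nth r s c) (nth r s b) ->
  (forall k, c < k < b -> forall w, G (nth r s k) w -> w \in take b s) ->
  lparent G s (nth r s b) = nth r s c.
Proof.
move=> /andP[cb bs] Gcb done; rewrite /lparent dfs_index_nth //.
apply: last_filter_take => [|//|k /done Gk]; first by rewrite cb ltnW.
by apply: contraTN isT => /Gk; rewrite in_take ?dfs_mem // dfs_index_nth // ltnn.
Qed.

Lemma dfs_lparent_step b : 0 < b < size s -> exists2 c, c < b &
  [/\ lparent G s (nth r s b) = nth r s c, G (nth r s c) (nth r s b)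
    & forall k, c < k < b -> forall w, G (nth r s k) w -> w \in take b s].
Proof.
move=> /[dup] /andP[_ bs] /dfs_s.2.2[c cb [Gcb done]].
by exists c => //; split => //; apply: lparent_nth; rewrite ?cb.
Qed.

Lemma lparent_adj v : v != r -> G (lparent G s v) v.
Proof.
by move/dfs_index_gt0/dfs_lparent_step => [c _ []]; rewrite nth_index ?dfs_mem // => ->.
Qed.

Lemma Ltree_parent_tree : Ltree G s =2 parent_tree (lparent G s) r.
Proof.
suff edgeE x y : Lparent_edge G s x y = (y != r) && (lparent G s y == x).
  by move=> x y; rewrite /Ltree !edgeE.
rewrite /Lparent_edge /= -/(lparent G s y) -has_filter.
case: (eqVneq y r) => [->|yr]; first by rewrite dfs_index_root take0.
move: (yr) => /dfs_index_gt0/dfs_lparent_step[c cy [_ Gcy _]].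
suff -> : has (G^~ y) (take (index y s) s) by [].
apply/hasP; exists (nth r s c); last by rewrite nth_index ?dfs_mem in Gcy.
by rewrite in_take ?dfs_mem // dfs_index_nth // (ltn_trans cy) ?index_mem ?dfs_mem.
Qed.

Lemma dfs_ancestor_or_closed a b : a < b < size s ->
  fconnect (lparent G s) (nth r s b) (nth r s a) \/
  forall w, G (nth r s a) w -> index w s < b.
Proof.
have [n] := ubnP b; elim: n => // n IH in a b *; rewrite ltnS => bn ab.
have /dfs_lparent_step[c cb [pb _ done]] : 0 < b < size s by lia.
have pb1 : fconnect (lparent G s) (nth r s b) (nth r s c) by rewrite -pb fconnect1.
case: (ltngtP a c) => [ac|ca|->]; [|right|by left].
- case: (IH a c) => [||/(connect_trans pb1)|closed]; [lia|lia|by left|].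
  by right=> w /closed /ltn_trans->.
- move=> w /done; rewrite in_take ?dfs_mem //; apply; lia.
Qed.

Lemma dfs_edge_comparable : symmetric G -> forall u v, G u v ->
  fconnect (lparent G s) u v || fconnect (lparent G s) v u.
Proof.
move=> symG u v; wlog uv : u v / index u s <= index v s => [WL|].
  by case: (leqP (index u s) (index v s)) => [|/ltnW] ?; [|rewrite orbC symG]; apply: WL.
move: uv; rewrite leq_eqVlt => /orP[/eqP|] => [/(congr1 (nth r s))|lt_uv Guv].
  by rewrite !nth_index ?dfs_mem // => ->; rewrite connect0.
have := @dfs_ancestor_or_closed (index u s) (index v s).
rewrite !nth_index ?dfs_mem // lt_uv index_mem dfs_mem => /(_ isT)[-> | /(_ v Guv)].
  by rewrite orbT.
by rewrite ltnn.
Qed.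

End DfsOrder.

Section TreeDfs.
Variables (V : finType) (p : V -> V) (r : V) (sigma : seq V).
Hypothesis p_root : p r = r.
Hypothesis dfs_sigma : dfs_order (parent_tree p r) r sigma.

Local Notation T := (parent_tree p r).
Local Notation idx v := (index v sigma).

Let mem_sigma := dfs_mem dfs_sigma.
Let index_nth_sigma := dfs_index_nth dfs_sigma.
Let index_root_sigma := dfs_index_root dfs_sigma.

Lemma index_parent_lt v : v != r -> idx (p v) < idx v.
Proof.
have [n] := ubnP (idx v); elim: n => // n IH in v *; rewrite ltnS => vn vr.
move: (dfs_index_gt0 dfs_sigma vr) => /[dup] /andP[_ vs] /dfs_sigma.2.2[j jv [Tjv _]].
have js : j < size sigma := ltn_trans jv vs.
move: Tjv; rewrite nth_index ?mem_sigma //.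
case/orP => [/andP[_ /eqP->] | /andP[jr /eqP pj]]; first by rewrite index_nth_sigma.
have := IH (nth r sigma j); rewrite pj index_nth_sigma //; lia.
Qed.

Lemma index_ancestor_le x w : fconnect p x w -> idx w <= idx x.
Proof.
move/iter_findex <-; elim: (findex p x w) => //= n; apply: leq_trans.
by case: (eqVneq (iter n p x) r) => [->|/index_parent_lt/ltnW]; rewrite ?p_root.
Qed.

Lemma tree_dfs_closed i : 0 < i < size sigma ->
  forall k, idx (p (nth r sigma i)) < k < i ->
  forall w, T (nth r sigma k) w -> w \in take i sigma.
Proof.
move=> /[dup] /andP[_ isz] /dfs_sigma.2.2[j ji [Tji done]].
have js : j < size sigma := ltn_trans ji isz.
suff -> : idx (p (nth r sigma i)) = j by exact: done.
move: Tji; case/orP => [/andP[_ /eqP->] | /andP[jr /eqP pj]]; first exact: index_nth_sigma.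
by have := index_parent_lt jr; rewrite pj !index_nth_sigma //; lia.
Qed.

Lemma tree_dfs_descendant_visited i x w : 0 < i < size sigma -> fconnect p x w ->
  idx (p (nth r sigma i)) < idx w < i -> idx x < i.
Proof.
move=> Hi /iter_findex; move: (findex p x w) => n.
elim: n x => [x <- /andP[]//|n IH x].
rewrite iterSr => iter_w bounds.
have px_lt := IH (p x) iter_w bounds.
have w_le : idx w <= idx (p x) by rewrite -iter_w index_ancestor_le ?fconnect_iter.
have xr : x != r.
  by apply: contraTneq w_le => ->; rewrite p_root index_root_sigma; lia.
have /(tree_dfs_closed Hi) : T (nth r sigma (idx (p x))) x.
  by rewrite nth_index ?mem_sigma // /parent_tree xr eqxx.
by rewrite in_take ?mem_sigma //; apply; lia.
Qed.

Variable G : rel V.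
Hypothesis G_parent : forall v, v != r -> G (p v) v.
Hypothesis G_comparable : forall u v, G u v -> fconnect p u v || fconnect p v u.

Lemma tree_dfs_closed_graph i : 0 < i < size sigma ->
  forall k, idx (p (nth r sigma i)) < k < i ->
  forall w, G (nth r sigma k) w -> w \in take i sigma.
Proof.
move=> Hi k /andP[pk ki] w /G_comparable; rewrite in_take ?mem_sigma //.
have ks : k < size sigma by case/andP: Hi => _; apply: ltn_trans.
case/orP => [/index_ancestor_le | wk]; first by rewrite index_nth_sigma //; lia.
apply: tree_dfs_descendant_visited Hi wk _.
by rewrite index_nth_sigma // pk ki.
Qed.

Lemma tree_dfs_dfs_order : dfs_order G r sigma.
Proof.
case: (dfs_sigma) => vs [hs _]; split => //; split => // i /[dup] Hi /andP[_ isz].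
have vr : nth r sigma i != r.
  apply: contraTneq Hi => /(congr1 (index^~ sigma)).
  by rewrite index_nth_sigma // index_root_sigma => ->.
exists (idx (p (nth r sigma i))).
  by have := index_parent_lt vr; rewrite index_nth_sigma.
split; last exact: tree_dfs_closed_graph.
by rewrite nth_index ?mem_sigma // G_parent.
Qed.

Lemma tree_dfs_Ltree : Ltree G sigma =2 T.
Proof.
have dfsG := tree_dfs_dfs_order.
suff lparentE y : lparent G sigma y = p y.
  by move=> x y; rewrite (Ltree_parent_tree dfsG) /parent_tree !lparentE.
case: (eqVneq y r) => [->|yr]; first by rewrite (lparent_root dfsG) p_root.
have /andP[_ ys] := dfs_index_gt0 dfs_sigma yr.
rewrite -{1}(nth_index r (dfs_mem dfs_sigma y)).
rewrite (lparent_nth dfsG (c := idx (p y))) ?nth_index ?mem_sigma ?G_parent //.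
- by rewrite index_parent_lt.
- by have := tree_dfs_closed_graph (dfs_index_gt0 dfs_sigma yr); rewrite nth_index ?mem_sigma.
Qed.

End TreeDfs.

Theorem lemma6 (V : finType) (G T : rel V) (r : V) (sigma : seq V) :
  simple_graph G -> connected_graph G ->
  spanning_tree G T -> is_Ltree_of_DFS G T r ->
  dfs_order T r sigma ->
  dfs_order G r sigma /\ Ltree G sigma =2 T.
Proof.
move=> [_ symG] _ _ [s dfs_s LsT] dfs_sigmaT.
have LsP := Ltree_parent_tree dfs_s.
have dfs_sigma : dfs_order (parent_tree (lparent G s) r) r sigma.
  by apply: eq_dfs_order dfs_sigmaT => x y; rewrite -LsT LsP.
have p_root := lparent_root dfs_s.
have G_parent := lparent_adj dfs_s.
have G_comparable := dfs_edge_comparable dfs_s symG.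
split; first exact: (tree_dfs_dfs_order p_root dfs_sigma G_parent G_comparable).
by move=> x y; rewrite (tree_dfs_Ltree p_root dfs_sigma G_parent G_comparable) -LsP LsT.
Qed.
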